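(* Let $d\geq 2$ and let $\Lambda$ be any quantum channel (completely positive trace-preserving map) on $d\times d$ matrices. Let $|\Phi^{+}\rangle=\frac{1}{\sqrt d}\sum_{i=0}^{d-1}|ii\rangle\in\mathbb{C}^d\otimes\mathbb{C}^d$ and $\rho_{\Phi^+,\Lambda}=(\mathcal{I}\otimes\Lambda)(|\Phi^+\rangle\langle\Phi^+|)$. Then $$\mathbb{F}(\Lambda)\geq\lambda_{\max}(\rho_{\Phi^+,\Lambda}),$$ where $\lambda_{\max}$ denotes the largest eigenvalue.
   Context: For a pure state $|\psi\rangle\in\mathbb{C}^d\otimes\mathbb{C}^d$ and a channel $\Lambda$ acting on the second factor, $\rho_{\psi,\Lambda}=(\mathcal{I}\otimes\Lambda)(|\psi\rangle\langle\psi|)$. The singlet fraction of a two-qudit state $\rho$ is $\mathbb{F}(\rho)=\max_{|\Phi\rangle}\langle\Phi|\rho|\Phi\rangle$, the maximum over all maximally entangled states $|\Phi\rangle\in\mathbb{C}^d\otimes\mathbb{C}^d$. The maximum achievable singlet fraction is $\mathbb{F}^*(\rho)=\max_{L}\mathbb{F}(L(\rho))$, the maximum over all trace-preserving LOCC operations $L$ (local operations and classical communication between the two parties). The one-shot optimal singlet fraction of the channel is $\mathbb{F}(\Lambda)=\max_{|\psi\rangle}\mathbb{F}^*(\rho_{\psi,\Lambda})$, maximized over all pure states $|\psi\rangle\in\mathbb{C}^d\otimes\mathbb{C}^d$. *)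

From HB Require Import structures.
From mathcomp Require Import all_boot all_order all_algebra.
From mathcomp Require Import boolp classical_sets reals.
From mathcomp Require Export complex mxtens.

Set Implicit Arguments.
Unset Strict Implicit.
Unset Printing Implicit Defensive.

Import GRing.Theory Num.Theory.
Local Open Scope ring_scope.
Local Open Scope classical_set_scope.

(** Complex scalars are [R[i]] for a real field [R]; a vector in
    C^a (x) C^b is a column vector of size [a * b], the index of
    |i>|k> being [mxtens_index (i, k)] (the convention of [tensmx],
    the Kronecker product [A *t B]). *)

Definition adj {R : rcfType} {m n : nat} (A : 'M[R[i]]_(m, n)) : 'M[R[i]]_(n, m) :=
  (map_mx (@conjc R) A)^T.

(** positive semidefinite: <v|A|v> >= 0 (real and nonnegative) for all v *)
Definition psd {R : rcfType} {n : nat} (A : 'M[R[i]]_n) : Prop :=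
  forall v : 'cV[R[i]]_n, 0 <= (adj v *m A *m v) 0 0.

Definition block {R : rcfType} {a b : nat} (X : 'M[R[i]]_(a * b)) (i j : 'I_a)
  : 'M[R[i]]_b :=
  \matrix_(k, l) X (mxtens_index (i, k)) (mxtens_index (j, l)).

(** (I_k (x) Phi)(X) = sum_{i,j} |i><j| (x) Phi(<i|X|j>) *)
Definition id_tens {R : rcfType} {k m n : nat}
  (Phi : 'M[R[i]]_m -> 'M[R[i]]_n) (X : 'M[R[i]]_(k * m)) : 'M[R[i]]_(k * n) :=
  \sum_(i < k) \sum_(j < k) (delta_mx i j *t Phi (block X i j)).

Definition ptrace2 {R : rcfType} {a b : nat} (X : 'M[R[i]]_(a * b)) : 'M[R[i]]_a :=
  \matrix_(i, j) \tr (block X i j).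

Definition linear_map {R : rcfType} {m n : nat} (Phi : 'M[R[i]]_m -> 'M[R[i]]_n)
  : Prop :=
  forall (c : R[i]) (X Y : 'M[R[i]]_m), Phi (c *: X + Y) = c *: Phi X + Phi Y.

Definition completely_positive {R : rcfType} {m n : nat}
  (Phi : 'M[R[i]]_m -> 'M[R[i]]_n) : Prop :=
  forall (k : nat) (X : 'M[R[i]]_(k * m)), psd X -> psd (id_tens Phi X).

Definition trace_preserving {R : rcfType} {m n : nat}
  (Phi : 'M[R[i]]_m -> 'M[R[i]]_n) : Prop :=
  forall X : 'M[R[i]]_m, \tr (Phi X) = \tr X.

Definition channel {R : rcfType} {m n : nat} (Phi : 'M[R[i]]_m -> 'M[R[i]]_n)
  : Prop :=
  [/\ linear_map Phi, completely_positive Phi & trace_preserving Phi].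

Definition unit_vector {R : rcfType} {n : nat} (v : 'cV[R[i]]_n) : Prop :=
  (adj v *m v) 0 0 = 1.

(** maximally entangled pure states of C^d (x) C^d: the reduced state is
    maximally mixed (this forces the vector to be a unit vector) *)
Definition max_entangled {R : rcfType} (d : nat) (phi : 'cV[R[i]]_(d * d)) : Prop :=
  ptrace2 (phi *m adj phi) = ((d%:R : R[i])^-1)%:M.

Definition phiplus {R : rcfType} (d : nat) : 'cV[R[i]]_(d * d) :=
  ((Num.sqrt (d%:R : R))^-1)%:C%C *:
    \sum_(i < d) (delta_mx i (0 : 'I_1) *t delta_mx i (0 : 'I_1) : 'cV[R[i]]_(d * d)).

Definition rho_of {R : rcfType} {d : nat} (psi : 'cV[R[i]]_(d * d))
  (Lam : 'M[R[i]]_d -> 'M[R[i]]_d) : 'M[R[i]]_(d * d) :=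
  id_tens Lam (psi *m adj psi).

(** Trace-preserving LOCC operations (finitely many rounds) from
    C^a (x) C^b to C^a' (x) C^b'.  In each round one party performs a
    local measurement (instrument), given by Kraus operators
    K_1..K_n : C^a -> C^a0 with sum_j K_j^dag K_j = I (the local output
    dimension a0 is arbitrary), broadcasts the outcome j, and the protocol
    continues with an LOCC operation L_j depending on j.  The overall map is
    X |-> sum_j L_j((K_j (x) I) X (K_j (x) I)^dag) (outcomes are forgotten at
    the end). *)
Inductive LOCC (R : rcfType) :
  forall a b a' b' : nat, ('M[R[i]]_(a * b) -> 'M[R[i]]_(a' * b')) -> Prop :=
| LOCC_id (a b : nat) : LOCC (fun X : 'M[R[i]]_(a * b) => X)
| LOCC_Alice (a b a0 a' b' n : nat) (K : 'I_n -> 'M[R[i]]_(a0, a))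
    (L : 'I_n -> 'M[R[i]]_(a0 * b) -> 'M[R[i]]_(a' * b')) :
    \sum_(j < n) (adj (K j) *m K j) = 1%:M ->
    (forall j, LOCC (L j)) ->
    LOCC (fun X : 'M[R[i]]_(a * b) =>
      \sum_(j < n) L j ((K j *t (1%:M : 'M[R[i]]_b)) *m X
                          *m adj (K j *t (1%:M : 'M[R[i]]_b))))
| LOCC_Bob (a b b0 a' b' n : nat) (K : 'I_n -> 'M[R[i]]_(b0, b))
    (L : 'I_n -> 'M[R[i]]_(a * b0) -> 'M[R[i]]_(a' * b')) :
    \sum_(j < n) (adj (K j) *m K j) = 1%:M ->
    (forall j, LOCC (L j)) ->
    LOCC (fun X : 'M[R[i]]_(a * b) =>
      \sum_(j < n) L j (((1%:M : 'M[R[i]]_a) *t K j) *m X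
                          *m adj ((1%:M : 'M[R[i]]_a) *t K j))).

Definition singlet_fraction {R : realType} {d : nat} (rho : 'M[R[i]]_(d * d)) : R :=
  sup [set complex.Re ((adj phi *m rho *m phi) 0 0) | phi in @max_entangled R d].

Definition max_singlet_fraction {R : realType} {d : nat} (rho : 'M[R[i]]_(d * d)) : R :=
  sup [set singlet_fraction (L rho) | L in [set L | @LOCC R d d d d L]].

Definition channel_singlet_fraction {R : realType} {d : nat}
  (Lam : 'M[R[i]]_d -> 'M[R[i]]_d) : R :=
  sup [set max_singlet_fraction (rho_of psi Lam) | psi in @unit_vector R (d * d)].

(** largest eigenvalue (of a Hermitian matrix, whose eigenvalues are real) *)
Definition lambda_max {R : realType} {n : nat} (A : 'M[R[i]]_n) : R :=
  sup [set x : R | eigenvalue A (x%:C)%C].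

From HB Require Import structures.
From mathcomp Require Import all_boot all_order all_algebra.
From mathcomp Require Import boolp classical_sets reals.
From mathcomp Require Import complex mxtens ring.

Set Implicit Arguments.
Unset Strict Implicit.
Unset Printing Implicit Defensive.
Import Order.TTheory GRing.Theory Num.Theory.
Local Open Scope ring_scope.

(* For a unit vector chi = sum_(k,i) M_ki |k>|i>, let psi = swap_conj chi be
   the vector with coefficient matrix M^dagger.  Both <chi|rho_(Phi+,Lam)|chi>
   and <Phi+|rho_(psi,Lam)|Phi+> expand to
     1/d sum_(k,l,i,j) conj(M_ki) M_lj Lam(|k><l|)_ij.
   For a unit eigenvector chi the left-hand side is the eigenvalue, and the
   right-hand side is a fidelity with a maximally entangled state, hence at
   most F(rho_psi) <= F*(rho_psi) <= F(Lam), the middle step by the trivial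
   LOCC protocol.  The suprema are finite because LOCC maps states to states
   and <phi|rho|phi> <= 2^(d^2) tr rho whenever rho >= 0 and the entries of
   phi have modulus at most 1. *)

Lemma sum_delta_nat (R : pzSemiRingType) n (i : 'I_n) (F : 'I_n -> R) :
  \sum_(k < n) (i == k)%:R * F k = F i.
Proof.
rewrite (bigD1 i) //= eqxx mul1r big1 ?addr0 // => k /negPf neq_ki.
by rewrite eq_sym neq_ki mul0r.
Qed.

Lemma exchange_big_pairs (V : nmodType) (I J : finType) (F : I -> I -> J -> J -> V) :
  \sum_k \sum_l \sum_i \sum_j F k l i j = \sum_i \sum_j \sum_k \sum_l F k l i j.
Proof.
under eq_bigr do rewrite exchange_big; rewrite exchange_big.
by under eq_bigr do under eq_bigr do rewrite exchange_big; under eq_bigr do rewrite exchange_big.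
Qed.

Lemma big_mxtens_index (V : nmodType) a b (F : 'I_(a * b) -> V) :
  \sum_(m < a * b) F m = \sum_(i < a) \sum_(k < b) F (mxtens_index (i, k)).
Proof.
rewrite pair_big /= (reindex (@mxtens_index a b)) /=; first by apply: eq_bigr => -[].
by exists (@mxtens_unindex a b) => m _; rewrite (mxtens_indexK, mxtens_unindexK).
Qed.

Section Tensor.
Variable R : pzRingType.

Lemma tensmx11 a b : (1%:M : 'M[R]_a) *t (1%:M : 'M[R]_b) = 1%:M.
Proof.
apply/matrixP => i j.
case: (mxtens_indexP i) => i1 i2; case: (mxtens_indexP j) => j1 j2.
rewrite tensmxE !mxE (can_eq (@mxtens_indexK a b)) xpair_eqE.
by case: (i1 == j1); case: (i2 == j2); rewrite ?mulr1 ?mulr0.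
Qed.

Lemma tensmx_suml m n p q I (r : seq I) (P : pred I) (F : I -> 'M[R]_(m, n))
  (B : 'M[R]_(p, q)) :
  (\sum_(i <- r | P i) F i) *t B = \sum_(i <- r | P i) (F i *t B).
Proof.
apply/matrixP => i j; rewrite !mxE !summxE mulr_suml.
by apply: eq_bigr => k _; rewrite !mxE.
Qed.

Lemma tensmx_sumr m n p q I (r : seq I) (P : pred I) (A : 'M[R]_(m, n))
  (F : I -> 'M[R]_(p, q)) :
  A *t (\sum_(i <- r | P i) F i) = \sum_(i <- r | P i) (A *t F i).
Proof.
apply/matrixP => i j; rewrite !mxE !summxE mulr_sumr.
by apply: eq_bigr => k _; rewrite !mxE.
Qed.

Lemma mxtrace_tens m n (A : 'M[R]_m) (B : 'M[R]_n) :
  \tr (A *t B) = \tr A * \tr B.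
Proof.
rewrite /mxtrace big_mxtens_index mulr_suml; apply: eq_bigr => i _.
by rewrite mulr_sumr; apply: eq_bigr => k _; rewrite tensmxE.
Qed.

End Tensor.

Lemma Re_le (R : rcfType) (x y : R[i]) : x <= y -> complex.Re x <= complex.Re y.
Proof. by rewrite lecE => /andP[]. Qed.

Section Operators.
Variable R : rcfType.
Local Notation C := R[i].

Lemma adjK m n (A : 'M[C]_(m, n)) : adj (adj A) = A.
Proof. by apply/matrixP => i j; rewrite !mxE conjcK. Qed.

Lemma adjM m n p (A : 'M[C]_(m, n)) (B : 'M[C]_(n, p)) :
  adj (A *m B) = adj B *m adj A.
Proof. by rewrite /adj map_mxM trmx_mul. Qed.

Lemma adjZ m n c (A : 'M[C]_(m, n)) : adj (c *: A) = conjc c *: adj A.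
Proof. by apply/matrixP => i j; rewrite !mxE rmorphM. Qed.

Lemma adj1 n : adj (1%:M : 'M[C]_n) = 1%:M.
Proof. by apply/matrixP => i j; rewrite !mxE eq_sym rmorph_nat. Qed.

Lemma adj_tens m n p q (A : 'M[C]_(m, n)) (B : 'M[C]_(p, q)) :
  adj (A *t B) = adj A *t adj B.
Proof. by rewrite /adj map_mxT trmx_tens. Qed.

Lemma outer_mxE m n (u : 'cV[C]_m) (v : 'cV[C]_n) p q :
  (u *m adj v) p q = u p 0 * conjc (v q 0).
Proof. by rewrite mxE big_ord1 !mxE. Qed.

Lemma adj_mulmx_diag n (u : 'cV[C]_n) :
  (adj u *m u) 0 0 = \sum_m conjc (u m 0) * u m 0.
Proof. by rewrite mxE; apply: eq_bigr => m _; rewrite !mxE. Qed.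

Lemma adj_mulmx_ge0 n (u : 'cV[C]_n) : 0 <= (adj u *m u) 0 0.
Proof. by rewrite adj_mulmx_diag sumr_ge0 // => m _; rewrite mulrC mulcJ_ge0. Qed.

Lemma adj_mulmx_eq0 n (u : 'cV[C]_n) : ((adj u *m u) 0 0 == 0) = (u == 0).
Proof.
apply/idP/eqP => [|->]; last by rewrite mulmx0 mxE.
rewrite adj_mulmx_diag psumr_eq0 => [/allP u0|m _]; last by rewrite mulrC mulcJ_ge0.
apply/matrixP => m j; rewrite (ord1 j) mxE.
have /implyP/(_ isT) := u0 m (mem_index_enum m).
by rewrite mulf_eq0 conjc_eq0 orbb => /eqP.
Qed.

Lemma psd_conj n p (X : 'M[C]_n) (B : 'M[C]_(p, n)) :
  psd X -> psd (B *m X *m adj B).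
Proof. by move=> X_psd v; have := X_psd (adj B *m v); rewrite adjM adjK !mulmxA. Qed.

Lemma psd_sum n I (r : seq I) (P : pred I) (F : I -> 'M[C]_n) :
  (forall i, P i -> psd (F i)) -> psd (\sum_(i <- r | P i) F i).
Proof.
move=> F_psd; apply: big_ind => // [v|X Y X_psd Y_psd v].
  by rewrite mulmx0 mul0mx mxE.
by rewrite mulmxDr mulmxDl mxE addr_ge0.
Qed.

Lemma psd_outer n (u : 'cV[C]_n) : psd (u *m adj u).
Proof.
move=> v; rewrite !mulmxA -mulmxA.
have -> : adj v *m u = adj (adj u *m v) by rewrite adjM adjK.
exact: adj_mulmx_ge0.
Qed.

Definition kraus_complete n p I (r : seq I) (K : I -> 'M[C]_(p, n)) :=
  \sum_(j <- r) (adj (K j) *m K j) = 1%:M.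

Lemma kraus_complete_tensl a b a0 I (r : seq I) (K : I -> 'M[C]_(a0, a)) :
  kraus_complete r K -> kraus_complete r (fun j => K j *t (1%:M : 'M_b)).
Proof.
rewrite /kraus_complete => K_complete.
under eq_bigr do rewrite adj_tens adj1 tensmx_mul mul1mx.
by rewrite -tensmx_suml K_complete tensmx11.
Qed.

Lemma kraus_complete_tensr a b b0 I (r : seq I) (K : I -> 'M[C]_(b0, b)) :
  kraus_complete r K -> kraus_complete r (fun j => (1%:M : 'M_a) *t K j).
Proof.
rewrite /kraus_complete => K_complete.
under eq_bigr do rewrite adj_tens adj1 tensmx_mul mul1mx.
by rewrite -tensmx_sumr K_complete tensmx11.
Qed.

Lemma psd_trace_kraus n p q I (r : seq I) (K : I -> 'M[C]_(p, n))
    (L : I -> 'M[C]_p -> 'M[C]_q) (X : 'M[C]_n) :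
  kraus_complete r K ->
  (forall j Y, psd Y -> psd (L j Y) /\ \tr (L j Y) = \tr Y) -> psd X ->
  psd (\sum_(j <- r) L j (K j *m X *m adj (K j))) /\
  \tr (\sum_(j <- r) L j (K j *m X *m adj (K j))) = \tr X.
Proof.
move=> K_complete L_ok X_psd; split.
  by apply: psd_sum => j _; apply: (L_ok j _ (psd_conj _ X_psd)).1.
rewrite raddf_sum /=; under eq_bigr => j _ do rewrite (L_ok j _ (psd_conj _ X_psd)).2.
rewrite -[X in RHS]mul1mx -K_complete mulmx_suml raddf_sum.
by apply: eq_bigr => j _; rewrite mxtrace_mulC mulmxA.
Qed.

Lemma LOCC_psd_trace a b a' b' (L : 'M[C]_(a * b) -> 'M[C]_(a' * b')) X :
  LOCC L -> psd X -> psd (L X) /\ \tr (L X) = \tr X.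
Proof.
move=> L_LOCC; elim: L_LOCC X => {a b a' b' L} [//|a b a0|a b b0] a' b' n K L
  K_complete _ IH X; apply: psd_trace_kraus IH.
  exact: kraus_complete_tensl.
exact: kraus_complete_tensr.
Qed.

Definition state n (X : 'M[C]_n) := psd X /\ \tr X = 1.

Lemma LOCC_state a b a' b' (L : 'M[C]_(a * b) -> 'M[C]_(a' * b')) X :
  LOCC L -> state X -> state (L X).
Proof. by move=> L_LOCC [X_psd X_tr]; rewrite /state -X_tr; apply: LOCC_psd_trace. Qed.

Definition qform n (X : 'M[C]_n) (u : 'cV[C]_n) : C := (adj u *m X *m u) 0 0.

Lemma qformE n (X : 'M[C]_n) u :
  qform X u = \sum_i \sum_j conjc (u i 0) * X i j * u j 0.
Proof.
rewrite /qform mxE exchange_big; apply: eq_bigr => j _.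
by rewrite mxE mulr_suml; apply: eq_bigr => i _; rewrite !mxE.
Qed.

Lemma qform1 n (u : 'cV[C]_n) : qform 1%:M u = (adj u *m u) 0 0.
Proof. by rewrite /qform mulmx1. Qed.

Lemma qformZ n (X : 'M[C]_n) c u : qform X (c *: u) = conjc c * c * qform X u.
Proof. by rewrite /qform adjZ -!scalemxAl -scalemxAr !mxE mulrA. Qed.

Lemma qform_delta n (X : 'M[C]_n) m : qform X (delta_mx m 0) = X m m.
Proof.
rewrite qformE (bigD1 m) //= [s in _ + s]big1 => [|i /negPf neq_im]; last first.
  by apply: big1 => j _; rewrite !mxE neq_im rmorph0 !mul0r.
rewrite addr0 (bigD1 m) //= [s in _ + s]big1 => [|j /negPf neq_jm]; last first.
  by rewrite !mxE neq_jm mulr0.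
by rewrite !mxE !eqxx andbT rmorph1 mul1r mulr1 addr0.
Qed.

Lemma qform_parallelogram n (X : 'M[C]_n) u v :
  qform X (u + v) + qform X (u - v) = 2 * qform X u + 2 * qform X v.
Proof.
rewrite !qformE !mulr_sumr -!big_split; apply: eq_bigr => i _.
rewrite !mulr_sumr -!big_split; apply: eq_bigr => j _ /=.
rewrite !mxE rmorphD rmorphB /=; ring.
Qed.

Lemma qform_sum_le n (X : 'M[C]_n) k (u : 'I_k -> 'cV[C]_n) : psd X ->
  qform X (\sum_(m < k) u m) <= 2 ^+ k * \sum_(m < k) qform X (u m).
Proof.
move=> X_psd; elim: k u => [|k IH] u.
  by rewrite !big_ord0 /qform mulmx0 mxE mulr0.
rewrite !big_ord_recl mulrDr.
have parallelogram_le v w : qform X (v + w) <= 2 * qform X v + 2 * qform X w.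
  by rewrite -qform_parallelogram lerDl X_psd.
apply: le_trans (parallelogram_le _ _) _; apply: lerD.
  by rewrite ler_wpM2r ?X_psd // exprS ler_peMr ?exprn_ege1 ?ler1n.
by rewrite exprS -mulrA ler_wpM2l ?ler0n ?IH.
Qed.

Lemma qform_le_trace n (X : 'M[C]_n) (u : 'cV[C]_n) : psd X ->
  (forall m, conjc (u m 0) * u m 0 <= 1) -> qform X u <= 2 ^+ n * \tr X.
Proof.
move=> X_psd u_le1; rewrite [u]matrix_sum_delta; under eq_bigr do rewrite big_ord1.
apply: le_trans (qform_sum_le _ X_psd) _; rewrite ler_wpM2l ?exprn_ge0 ?ler0n //.
apply: ler_sum => m _; rewrite qformZ qform_delta ler_piMl //.
by rewrite -qform_delta X_psd.
Qed.

Lemma eigenvalue_qform n (A : 'M[C]_n) (x : C) :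
  eigenvalue A x -> exists2 chi, unit_vector chi & qform A chi = x.
Proof.
case/eigenvalueP => v vA v_neq0; set w := adj v.
have qform_w : qform A w = x * qform 1%:M w.
  by rewrite /qform /w adjK vA mulmx1 -scalemxAl mxE.
have w_gt0 : 0 < qform 1%:M w.
  rewrite lt_def qform1 adj_mulmx_ge0 andbT adj_mulmx_eq0.
  by apply: contra v_neq0 => /eqP w0; rewrite -[v]adjK -/w w0 /adj map_mx0 trmx0.
pose c := sqrtC (qform 1%:M w)^-1.
have c2 : conjc c * c = (qform 1%:M w)^-1.
  have c_conj : conjc c = c by apply: geC0_conj; rewrite sqrtC_ge0 invr_ge0 ltW.
  by rewrite c_conj -expr2 sqrtCK.
exists (c *: w); first by rewrite /unit_vector -qform1 qformZ c2 mulVf ?gt_eqF.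
by rewrite qformZ qform_w c2 mulrCA mulVf ?mulr1 ?gt_eqF.
Qed.

Section LinearMap.
Variables (m n : nat) (Phi : 'M[C]_m -> 'M[C]_n).
Hypothesis Phi_linear : linear_map Phi.

Lemma linear_map0 : Phi 0 = 0.
Proof.
apply: (addrI (Phi 0)); rewrite addr0.
by have := Phi_linear 1 0 0; rewrite !scale1r addr0 => <-.
Qed.

Lemma linear_mapZ c X : Phi (c *: X) = c *: Phi X.
Proof. by have := Phi_linear c X 0; rewrite !addr0 linear_map0 addr0. Qed.

Lemma linear_map_sum I (r : seq I) (P : pred I) (F : I -> 'M[C]_m) :
  Phi (\sum_(i <- r | P i) F i) = \sum_(i <- r | P i) Phi (F i).
Proof.
apply: (big_morph Phi _ linear_map0) => X Y.
by have := Phi_linear 1 X Y; rewrite !scale1r.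
Qed.

End LinearMap.

Lemma id_tensE k m n (Phi : 'M[C]_m -> 'M[C]_n) (X : 'M[C]_(k * m)) i j a b :
  id_tens Phi X (mxtens_index (i, a)) (mxtens_index (j, b)) =
  Phi (block X i j) a b.
Proof.
rewrite /id_tens summxE; under eq_bigr do rewrite summxE.
under eq_bigr do under eq_bigr do rewrite tensmxE mxE -mulnb natrM -mulrA.
by under eq_bigr do rewrite -mulr_sumr sum_delta_nat; rewrite sum_delta_nat.
Qed.

Lemma mxtrace_delta n (i j : 'I_n) : \tr (delta_mx i j : 'M[C]_n) = (i == j)%:R.
Proof.
by rewrite /mxtrace (bigD1 i) //= big1 => [|k /negPf neq_ki]; rewrite mxE ?eqxx ?neq_ki ?addr0.
Qed.

Lemma mxtrace_id_tens k m (Phi : 'M[C]_m -> 'M[C]_m) (X : 'M[C]_(k * m)) :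
  trace_preserving Phi -> \tr (id_tens Phi X) = \tr X.
Proof.
move=> Phi_TP; rewrite /id_tens raddf_sum [in RHS]/mxtrace big_mxtens_index.
apply: eq_bigr => i _; rewrite raddf_sum /=.
under eq_bigr do rewrite mxtrace_tens mxtrace_delta.
by rewrite sum_delta_nat Phi_TP /mxtrace; apply: eq_bigr => a _; rewrite mxE.
Qed.

Lemma rho_of_state d (Lam : 'M[C]_d -> 'M[C]_d) psi :
  channel Lam -> unit_vector psi -> state (rho_of psi Lam).
Proof.
case=> _ Lam_CP Lam_TP psi_unit; split; first exact/Lam_CP/psd_outer.
by rewrite mxtrace_id_tens // mxtrace_mulC -psi_unit /mxtrace big_ord1.
Qed.

Lemma qform_mxtens a b (X : 'M[C]_(a * b)) u :
  qform X u = \sum_i \sum_k \sum_j \sum_l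
    conjc (u (mxtens_index (i, k)) 0) * X (mxtens_index (i, k)) (mxtens_index (j, l))
      * u (mxtens_index (j, l)) 0.
Proof.
rewrite qformE big_mxtens_index; apply: eq_bigr => i _; apply: eq_bigr => k _.
by rewrite big_mxtens_index.
Qed.

Lemma block_outer a b (u : 'cV[C]_(a * b)) i j :
  block (u *m adj u) i j =
  \sum_k \sum_l (u (mxtens_index (i, k)) 0 * conjc (u (mxtens_index (j, l)) 0))
    *: delta_mx k l.
Proof.
rewrite [LHS]matrix_sum_delta; apply: eq_bigr => k _; apply: eq_bigr => l _.
by rewrite mxE outer_mxE.
Qed.

Lemma max_entangled_entry_le1 d (phi : 'cV[C]_(d * d)) m :
  max_entangled phi -> conjc (phi m 0) * phi m 0 <= 1.
Proof.
move=> /matrixP phi_maxent; case: (mxtens_indexP m) => i k.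
have := phi_maxent i i; rewrite !mxE eqxx mulr1n => tr_block.
have d_gt0 : (0 < d)%N by apply: leq_ltn_trans (ltn_ord i).
apply: le_trans (_ : (d%:R : C)^-1 <= 1); last by rewrite invf_le1 ?ltr0n ?ler1n.
rewrite -tr_block /mxtrace (bigD1 k) //= mxE outer_mxE mulrC lerDl.
by apply: sumr_ge0 => l _; rewrite mxE outer_mxE mulcJ_ge0.
Qed.

Section MaximallyEntangled.
Variable d : nat.
Hypothesis d_gt0 : (0 < d)%N.

Local Notation sqrtd_inv := ((Num.sqrt (d%:R : R))^-1)%:C%C.

Lemma phiplusE i k : phiplus d (mxtens_index (i, k)) 0 = sqrtd_inv * (i == k)%:R.
Proof.
have eq_ord1 (x y : 'I_1) : (x == y) = true by rewrite !ord1.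
rewrite mxE summxE; congr (_ * _).
under eq_bigr do rewrite !mxE mxtens_indexK /= !eq_ord1 !andbT.
by rewrite sum_delta_nat eq_sym.
Qed.

Lemma sqrtd_inv2 : conjc sqrtd_inv * sqrtd_inv = (d%:R : C)^-1.
Proof.
rewrite conjc_real -rmorphM -expr2 exprVn sqr_sqrtr ?ler0n //.
by rewrite rmorphV ?rmorph_nat // unitfE pnatr_eq0 -lt0n.
Qed.

Lemma qform_phiplus (X : 'M[C]_(d * d)) :
  qform X (phiplus d) =
  (d%:R)^-1 * \sum_i \sum_j X (mxtens_index (i, i)) (mxtens_index (j, j)).
Proof.
rewrite qform_mxtens mulr_sumr; apply: eq_bigr => i _.
rewrite (bigD1 i) //= [s in _ + s]big1 => [|k /negPf neq_ik]; last first.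
  apply: big1 => j _; apply: big1 => l _.
  by rewrite (phiplusE i k) eq_sym neq_ik mulr0 rmorph0 !mul0r.
rewrite addr0 mulr_sumr; apply: eq_bigr => j _.
rewrite (bigD1 j) //= [s in _ + s]big1 => [|l /negPf neq_jl]; last first.
  by rewrite (phiplusE j l) eq_sym neq_jl !mulr0.
by rewrite addr0 !phiplusE !eqxx mulr1 -sqrtd_inv2; ring.
Qed.

Lemma block_phiplus i j :
  block (phiplus d *m adj (phiplus d)) i j = (d%:R : C)^-1 *: delta_mx i j.
Proof.
apply/matrixP => k l; rewrite mxE outer_mxE !phiplusE -sqrtd_inv2 !mxE.
by rewrite rmorphM rmorph_nat (eq_sym k) (eq_sym l) -mulnb natrM; ring.
Qed.

Lemma max_entangled_phiplus : max_entangled (phiplus (R := R) d).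
Proof.
apply/matrixP => i j.
by rewrite !mxE block_phiplus mxtraceZ mxtrace_delta mulr_natr.
Qed.

End MaximallyEntangled.

Definition swap_conj d (chi : 'cV[C]_(d * d)) : 'cV[C]_(d * d) :=
  \col_m conjc (chi (mxtens_index ((mxtens_unindex m).2, (mxtens_unindex m).1)) 0).

Lemma swap_conjE d (chi : 'cV[C]_(d * d)) i k :
  swap_conj chi (mxtens_index (i, k)) 0 = conjc (chi (mxtens_index (k, i)) 0).
Proof. by rewrite mxE mxtens_indexK. Qed.

Lemma unit_vector_swap_conj d (chi : 'cV[C]_(d * d)) :
  unit_vector chi -> unit_vector (swap_conj chi).
Proof.
rewrite /unit_vector !adj_mulmx_diag !big_mxtens_index exchange_big /= => <-.
by apply: eq_bigr => i _; apply: eq_bigr => k _; rewrite swap_conjE conjcK mulrC.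
Qed.

Lemma qform_rho_phiplus d (Lam : 'M[C]_d -> 'M[C]_d) (chi : 'cV[C]_(d * d)) :
  (0 < d)%N -> linear_map Lam ->
  qform (rho_of (phiplus d) Lam) chi = qform (rho_of (swap_conj chi) Lam) (phiplus d).
Proof.
move=> d_gt0 Lam_linear.
transitivity ((d%:R)^-1 * \sum_k \sum_l \sum_i \sum_j
   conjc (chi (mxtens_index (k, i)) 0) * chi (mxtens_index (l, j)) 0 *
   Lam (delta_mx k l) i j).
  rewrite qform_mxtens mulr_sumr; apply: eq_bigr => k _.
  rewrite exchange_big mulr_sumr; apply: eq_bigr => l _.
  rewrite mulr_sumr; apply: eq_bigr => i _; rewrite mulr_sumr; apply: eq_bigr => j _.
  rewrite /rho_of id_tensE block_phiplus // linear_mapZ // mxE.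
  by rewrite mulrCA -!mulrA [Lam _ _ _ * _]mulrC.
rewrite (qform_phiplus d_gt0); congr (_ * _); rewrite exchange_big_pairs.
apply: eq_bigr => i _; apply: eq_bigr => j _.
rewrite /rho_of id_tensE block_outer linear_map_sum //= summxE.
apply: eq_bigr => k _; rewrite linear_map_sum //= summxE.
by apply: eq_bigr => l _; rewrite linear_mapZ // mxE !swap_conjE conjcK.
Qed.

End Operators.

Lemma sup_le_ge0 (R : realType) (E : set R) x : 0 <= x -> ubound E x -> sup E <= x.
Proof.
move=> x_ge0 E_x; have [->|/set0P E_neq0] := eqVneq E set0; first by rewrite sup0.
exact: ge_sup.
Qed.

Section SingletFraction.
Variable R : realType.
Local Notation C := R[i].
Variable d : nat.
Hypothesis d_gt0 : (0 < d)%N.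

Local Notation bound := (2 ^+ (d * d) : R).

Lemma Re_qform_state_le (rho : 'M[C]_(d * d)) phi :
  state rho -> max_entangled phi -> complex.Re (qform rho phi) <= bound.
Proof.
case=> rho_psd rho_tr phi_maxent; apply: (@Re_le _ _ bound%:C%C).
have := qform_le_trace rho_psd (fun m => max_entangled_entry_le1 m phi_maxent).
by rewrite rho_tr mulr1 rmorphXn rmorph_nat.
Qed.

Lemma singlet_fraction_ge (rho : 'M[C]_(d * d)) phi :
  state rho -> max_entangled phi -> complex.Re (qform rho phi) <= singlet_fraction rho.
Proof.
move=> rho_state phi_maxent; apply: ub_le_sup; last by exists phi.
by exists bound => _ [psi psi_maxent <-]; apply: Re_qform_state_le.
Qed.

Lemma singlet_fraction_le (rho : 'M[C]_(d * d)) :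
  state rho -> singlet_fraction rho <= bound.
Proof.
move=> rho_state; apply: ge_sup.
  by exists (complex.Re (qform rho (phiplus d))), (phiplus d) => //; apply: max_entangled_phiplus.
by move=> _ [psi psi_maxent <-]; apply: Re_qform_state_le.
Qed.

Lemma singlet_fraction_le_max (rho : 'M[C]_(d * d)) :
  state rho -> singlet_fraction rho <= max_singlet_fraction rho.
Proof.
move=> rho_state; apply: ub_le_sup; last by exists id => //; apply: LOCC_id.
by exists bound => _ [L L_LOCC <-]; apply/singlet_fraction_le/LOCC_state.
Qed.

Lemma max_singlet_fraction_le (rho : 'M[C]_(d * d)) :
  state rho -> max_singlet_fraction rho <= bound.
Proof.
move=> rho_state; apply: sup_le_ge0; first by rewrite exprn_ge0.
by move=> _ [L L_LOCC <-]; apply/singlet_fraction_le/LOCC_state.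
Qed.

Variable Lam : 'M[C]_d -> 'M[C]_d.
Hypothesis Lam_channel : channel Lam.

Lemma max_singlet_fraction_le_channel psi : unit_vector psi ->
  max_singlet_fraction (rho_of psi Lam) <= channel_singlet_fraction Lam.
Proof.
move=> psi_unit; apply: ub_le_sup; last by exists psi.
by exists bound => _ [psi' psi'_unit <-]; apply/max_singlet_fraction_le/rho_of_state.
Qed.

Lemma Re_qform_rho_phiplus_le chi : unit_vector chi ->
  complex.Re (qform (rho_of (phiplus d) Lam) chi) <= channel_singlet_fraction Lam.
Proof.
case: Lam_channel => Lam_linear _ _ chi_unit.
have psi_unit := unit_vector_swap_conj chi_unit.
have rho_state := rho_of_state Lam_channel psi_unit.
rewrite qform_rho_phiplus //; apply: le_trans (max_singlet_fraction_le_channel psi_unit).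
apply: le_trans (singlet_fraction_le_max rho_state).
exact/singlet_fraction_ge/max_entangled_phiplus.
Qed.

Lemma channel_singlet_fraction_ge0 : 0 <= channel_singlet_fraction Lam.
Proof.
pose i := Ordinal d_gt0; pose chi : 'cV[C]_(d * d) := delta_mx (mxtens_index (i, i)) 0.
have chi_unit : unit_vector chi by rewrite /unit_vector -qform1 qform_delta mxE eqxx.
apply: le_trans (Re_qform_rho_phiplus_le chi_unit); apply: (@Re_le _ 0).
by case: Lam_channel => _ Lam_CP _; apply/Lam_CP/psd_outer.
Qed.

End SingletFraction.

Theorem lemma2 (R : realType) (d : nat) (Lam : 'M[R[i]]_d -> 'M[R[i]]_d) :
  (2 <= d)%N -> channel Lam ->
  lambda_max (rho_of (phiplus d) Lam) <= channel_singlet_fraction Lam.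
Proof.
move=> d_ge2 Lam_channel; have d_gt0 : (0 < d)%N := ltnW d_ge2.
(* [lambda_max] is [sup set0 = 0] if there is no real eigenvalue. *)
apply: sup_le_ge0; first exact: channel_singlet_fraction_ge0.
move=> x /eigenvalue_qform [chi chi_unit qform_chi].
by have := Re_qform_rho_phiplus_le d_gt0 Lam_channel chi_unit; rewrite qform_chi.
Qed.
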